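(* Consider the coupled opinion–network system described in the context with logistic weight dynamics, and assume there is a constant $c\ge 1/2$ with $\phi(r)>c$ for all $r\in[-2,2]$. Then the population reaches consensus (there exists $x^*$ with $x_i(t)\to x^*$ for all $i$) and, for all $i,j$, $w_{ij}(t)\to \mathbb{1}\{w_{ij}(0)>0\}$ as $t\to\infty$.
   Context: There are $N$ individuals with opinions $x_i(t)\in[-1,1]$ and edge weights $w_{ij}(t)\in[0,1]$. The degree is $k_i=\sum_{j=1}^N w_{ij}$. With interaction function $\phi:[-2,2]\to[0,1]$, the system with logistic weight dynamics is $\frac{dx_i}{dt}=\frac{1}{k_i}\sum_{j\neq i} w_{ij}\,\phi(x_j-x_i)(x_j-x_i)$, $\frac{dw_{ij}}{dt}=w_{ij}(1-w_{ij})\big(2\phi(x_j-x_i)-1\big)$ for $i\neq j$, and $w_{ii}\equiv 1$. Standing assumptions: $\phi$ is Lipschitz continuous, even, and $\phi(0)>0$; $x_1(0)\le\dots\le x_N(0)$; $w_{ii}=1$; the initial network $w(0)$ is strongly connected (for all $i,j$ there is a sequence $i=i_0,\dots,i_m=j$ with $w_{i_n i_{n+1}}(0)>0$). *)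

From Stdlib Require Import Reals Lra List Relations.
From Coquelicot Require Import Coquelicot.
Open Scope R_scope.

Definition sumN (N : nat) (f : nat -> R) : R :=
  fold_right Rplus 0 (map f (seq 0 N)).

Definition degree (N : nat) (W : nat -> nat -> R) (i : nat) : R :=
  sumN N (fun j => W i j).

Definition opinion_rhs (N : nat) (phi : R -> R) (X : nat -> R)
    (W : nat -> nat -> R) (i : nat) : R :=
  / degree N W i *
  sumN N (fun j => if Nat.eqb j i then 0
                   else W i j * phi (X j - X i) * (X j - X i)).

Definition weight_rhs (phi : R -> R) (X : nat -> R) (W : nat -> nat -> R)
    (i j : nat) : R :=
  W i j * (1 - W i j) * (2 * phi (X j - X i) - 1).

Definition pos_edge (N : nat) (W : nat -> nat -> R) (i j : nat) : Prop :=
  (i < N)%nat /\ (j < N)%nat /\ W i j > 0.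

Definition strongly_connected (N : nat) (W : nat -> nat -> R) : Prop :=
  forall i j, (i < N)%nat -> (j < N)%nat ->
    clos_refl_trans nat (pos_edge N W) i j.

Definition lipschitz_on_22 (phi : R -> R) : Prop :=
  exists L : R, forall r s, -2 <= r <= 2 -> -2 <= s <= 2 ->
    Rabs (phi r - phi s) <= L * Rabs (r - s).

Definition ind_pos (a : R) : R := if Rlt_dec 0 a then 1 else 0.

From Stdlib Require Import Reals Lra Lia List Relations.
From Coquelicot Require Import Coquelicot.
Open Scope R_scope.

(* Since [phi > 1/2] on [[-2, 2]], Lipschitz continuity gives [2 phi - 1 >= mp > 0] there.
   Hence every weight is nondecreasing; by Gronwall a zero weight stays zero, and for a
   positive one [1 - w_ij] decays like [exp (- w_ij(0) mp t)].

   The opinion equation is then a linear consensus system [x_i' = sum_k a_ik (x_k - x_i)]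
   with [a_ik >= 0], row sums [<= 1], and [a_ij >= al > 0] on every edge of the initial
   network (the weights only grow). For such a system every interval [[m, M]] containing
   all opinions is forward invariant, and the gap [M - x_0] is passed on along walks to
   individual [0], losing a factor [al] per edge and [exp (-1)] per unit of time. With
   walks of length at most [K], after time [K] the interval has shrunk by the factor
   [1 - al^K exp (-K)], so the opinions converge to a common limit. *)

Lemma In_seq0 N k : In k (seq 0 N) <-> (k < N)%nat.
Proof. rewrite in_seq; lia. Qed.

Lemma sumN_ext N f g :
  (forall k, (k < N)%nat -> f k = g k) -> sumN N f = sumN N g.
Proof.
  intros Hfg; unfold sumN.
  assert (H : forall k, In k (seq 0 N) -> f k = g k) by (intros k; rewrite In_seq0; auto).
  revert H; induction (seq 0 N) as [|k l IH]; intros H; simpl; [easy|].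
  rewrite H, IH; auto with datatypes.
Qed.

Lemma sumN_le N f g :
  (forall k, (k < N)%nat -> f k <= g k) -> sumN N f <= sumN N g.
Proof.
  intros Hfg; unfold sumN.
  assert (H : forall k, In k (seq 0 N) -> f k <= g k) by (intros k; rewrite In_seq0; auto).
  revert H; induction (seq 0 N) as [|k l IH]; intros H; simpl; [lra|].
  apply Rplus_le_compat; auto with datatypes.
Qed.

Lemma sumN_plus N f g : sumN N (fun k => f k + g k) = sumN N f + sumN N g.
Proof. unfold sumN; induction (seq 0 N); simpl; lra. Qed.

Lemma sumN_scal N c f : sumN N (fun k => c * f k) = c * sumN N f.
Proof. unfold sumN; induction (seq 0 N); simpl; lra. Qed.

Lemma sumN_const N c : sumN N (fun _ => c) = INR N * c.
Proof.
  unfold sumN; rewrite <- (length_seq N 0) at 2.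
  induction (seq 0 N); simpl length; [simpl; lra|].
  rewrite S_INR; simpl; lra.
Qed.

Lemma sumN_nonneg N f : (forall k, (k < N)%nat -> 0 <= f k) -> 0 <= sumN N f.
Proof.
  intros Hf; rewrite <- (Rmult_0_r (INR N)), <- sumN_const.
  now apply sumN_le.
Qed.

Lemma sumN_term_le N f i :
  (forall k, (k < N)%nat -> 0 <= f k) -> (i < N)%nat -> f i <= sumN N f.
Proof.
  intros Hf Hi; unfold sumN.
  assert (H : forall k, In k (seq 0 N) -> 0 <= f k) by (intros k; rewrite In_seq0; auto).
  apply In_seq0 in Hi; revert i Hi.
  enough ((0 <= fold_right Rplus 0 (map f (seq 0 N))) /\
          (forall i, In i (seq 0 N) -> f i <= fold_right Rplus 0 (map f (seq 0 N)))) by easy.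
  revert H; induction (seq 0 N) as [|k l IH]; intros H; simpl; [split; [lra|easy]|].
  destruct IH as [Hl IH]; auto with datatypes.
  assert (0 <= f k) by auto with datatypes.
  split; [lra|]. intros i [<-|Hi]; [lra|]. specialize (IH i Hi); lra.
Qed.

Lemma is_derive_sumN N (f : R -> nat -> R) df t :
  (forall k, (k < N)%nat -> is_derive (fun s => f s k) t (df k)) ->
  is_derive (fun s => sumN N (f s)) t (sumN N df).
Proof.
  intros Hf; unfold sumN.
  assert (H : forall k, In k (seq 0 N) -> is_derive (fun s => f s k) t (df k))
    by (intros k; rewrite In_seq0; auto).
  revert H; induction (seq 0 N) as [|k l IH]; intros H; simpl.
  - apply (is_derive_const 0).
  - apply (is_derive_plus (fun s => f s k)); auto with datatypes.
Qed.

Lemma right_continuous_of_derive (f : R -> R) t l :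
  is_derive f t l -> filterlim f (at_right t) (locally (f t)).
Proof.
  intros Hf; eapply filterlim_filter_le_1; [apply filter_le_within|].
  apply (ex_derive_continuous (K := R_AbsRing) (V := R_NormedModule)); now exists l.
Qed.

Lemma right_continuous_mult (f g : R -> R) a :
  filterlim f (at_right a) (locally (f a)) ->
  filterlim g (at_right a) (locally (g a)) ->
  filterlim (fun s => f s * g s) (at_right a) (locally (f a * g a)).
Proof.
  intros Hf Hg; eapply filterlim_comp_2; [exact Hf|exact Hg|].
  apply (filterlim_mult (K := R_AbsRing)).
Qed.

Lemma increment_le_of_derive_le (f f' : R -> R) a m :
  (forall t, a < t -> is_derive f t (f' t)) ->
  (forall t, a < t -> f' t <= m) ->
  filterlim f (at_right a) (locally (f a)) ->
  forall s t, a <= s <= t -> f t - f s <= m * (t - s).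
Proof.
  intros Hd Hm Hc.
  assert (Hopen : forall s t, a < s <= t -> f t - f s <= m * (t - s)).
  { intros s t Hst.
    destruct (MVT_gen f s t f') as [c [Hcst ->]];
      rewrite ?Rmin_left, ?Rmax_right in * by lra.
    - intros y Hy; apply Hd; lra.
    - intros y Hy; apply continuity_pt_filterlim.
      apply (ex_derive_continuous (K := R_AbsRing) (V := R_NormedModule)).
      exists (f' y); apply Hd; lra.
    - apply Rmult_le_compat_r; [lra|apply Hm; lra]. }
  intros s t [[Has | ->] Hst]; [apply Hopen; lra|].
  destruct (Req_dec s t) as [<-|Hst']; [lra|].
  assert (Hlim : Rbar_le (f t - m * (t - s)) (f s)).
  { apply (filterlim_le (F := at_right s) (fun u => f t - m * (t - u)) f).
    - assert (Hd0 : 0 < t - s) by lra.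
      exists (mkposreal _ Hd0); intros u Hu Hsu.
      apply Rabs_lt_between' in Hu; simpl in Hu.
      assert (f t - f u <= m * (t - u)) by (apply Hopen; lra). lra.
    - apply (right_continuous_of_derive (fun u => f t - m * (t - u)) s m).
      auto_derive; [easy|unfold Rminus; ring].
    - exact Hc. }
  simpl in Hlim; lra.
Qed.

Lemma increment_ge_of_derive_ge (f f' : R -> R) a m :
  (forall t, a < t -> is_derive f t (f' t)) ->
  (forall t, a < t -> m <= f' t) ->
  filterlim f (at_right a) (locally (f a)) ->
  forall s t, a <= s <= t -> m * (t - s) <= f t - f s.
Proof.
  intros Hd Hm Hc s t Hst.
  assert (- f t - - f s <= - m * (t - s)); [|lra].
  apply (increment_le_of_derive_le (fun u => - f u) (fun u => - f' u) a); [| | |exact Hst].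
  - intros u Hu; apply (is_derive_opp f), Hd, Hu.
  - intros u Hu; specialize (Hm u Hu); lra.
  - eapply filterlim_comp; [exact Hc|].
    apply (filterlim_opp (K := R_AbsRing) (V := R_NormedModule)).
Qed.

Lemma is_derive_mult_exp (f : R -> R) df k c t :
  is_derive f t df ->
  is_derive (fun s => f s * exp (k * (s - c))) t ((df + k * f t) * exp (k * (t - c))).
Proof.
  intros Hf.
  assert (He : is_derive (fun s => exp (k * (s - c))) t (k * exp (k * (t - c))))
    by (auto_derive; [easy|unfold Rminus; ring]).
  replace ((df + k * f t) * exp (k * (t - c)))
    with (plus (mult df (exp (k * (t - c)))) (mult (f t) (k * exp (k * (t - c)))))
    by (unfold plus, mult; simpl; ring).
  exact (is_derive_mult f _ t _ _ Hf He (fun u v => Rmult_comm u v)).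
Qed.

Lemma gronwall (f f' : R -> R) a k :
  (forall t, a < t -> is_derive f t (f' t)) ->
  (forall t, a < t -> f' t <= k * f t) ->
  filterlim f (at_right a) (locally (f a)) ->
  forall t, a <= t -> f t <= f a * exp (k * (t - a)).
Proof.
  intros Hd Hk Hc t Ht.
  set (g := fun s => f s * exp (- k * (s - a))).
  assert (Hg : g t - g a <= 0 * (t - a)).
  { apply (increment_le_of_derive_le g (fun s => (f' s + - k * f s) * exp (- k * (s - a))) a).
    - intros s Hs; apply is_derive_mult_exp, Hd, Hs.
    - intros s Hs. specialize (Hk s Hs).
      assert (0 < exp (- k * (s - a))) by apply exp_pos. nra.
    - apply (right_continuous_mult f (fun s => exp (- k * (s - a)))); [exact Hc|].
      apply (right_continuous_of_derive (fun s => exp (- k * (s - a))) a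
               (- k * exp (- k * (a - a)))).
      auto_derive; [easy|unfold Rminus; ring].
    - lra. }
  unfold g in Hg.
  rewrite Rminus_diag, Rmult_0_r, exp_0, Rmult_1_r in Hg.
  assert (Hexp : exp (- k * (t - a)) * exp (k * (t - a)) = 1)
    by (rewrite <- exp_plus, <- exp_0; f_equal; ring).
  assert (0 < exp (k * (t - a))) by apply exp_pos.
  replace (f t) with (f t * exp (- k * (t - a)) * exp (k * (t - a)))
    by (rewrite Rmult_assoc, Hexp; ring).
  apply Rmult_le_compat_r; lra.
Qed.

Lemma exp_decay_lt k eps t : 0 < k -> 0 < eps -> - ln eps / k < t -> exp (- k * t) < eps.
Proof.
  intros Hk Heps Ht; rewrite <- (exp_ln eps) by exact Heps; apply exp_increasing.
  apply (Rmult_lt_compat_l k) in Ht; [|exact Hk].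
  replace (k * (- ln eps / k)) with (- ln eps) in Ht by (field; lra); lra.
Qed.

Definition pos_part_sq (r : R) : R := Rmax r 0 * Rmax r 0.

Lemma pos_part_sq_nonneg r : 0 <= pos_part_sq r.
Proof. apply Rle_0_sqr. Qed.

Lemma is_derive_pos_part_sq r : is_derive pos_part_sq r (2 * Rmax r 0).
Proof.
  destruct (Rtotal_order r 0) as [Hr|[->|Hr]].
  - rewrite Rmax_right, Rmult_0_r by lra.
    apply (is_derive_ext_loc (fun _ => 0)); [|apply (is_derive_const 0)].
    assert (Hd : 0 < - r) by lra.
    exists (mkposreal _ Hd); intros y Hy; apply Rabs_lt_between' in Hy; simpl in Hy.
    unfold pos_part_sq; rewrite Rmax_right by lra; now rewrite Rmult_0_l.
  - rewrite Rmax_left, Rmult_0_r by lra.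
    apply is_derive_Reals; intros eps Heps; exists (mkposreal eps Heps); intros h Hh0 Hh.
    simpl in Hh; unfold pos_part_sq.
    rewrite Rplus_0_l, (Rmax_left 0 0), Rmult_0_r, !Rminus_0_r by lra.
    unfold Rmax; destruct (Rle_dec h 0).
    + unfold Rdiv; rewrite !Rmult_0_l, Rabs_R0; lra.
    + replace (h * h / h) with h by (field; lra). exact Hh.
  - rewrite Rmax_left by lra.
    apply (is_derive_ext_loc (fun y => y * y)); [|auto_derive; [easy|ring]].
    exists (mkposreal _ Hr); intros y Hy; apply Rabs_lt_between' in Hy; simpl in Hy.
    unfold pos_part_sq; now rewrite Rmax_left by lra.
Qed.

Lemma lipschitz_attains_min (f : R -> R) a b L :
  a <= b ->
  (forall r s, a <= r <= b -> a <= s <= b -> Rabs (f r - f s) <= L * Rabs (r - s)) ->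
  exists r0, a <= r0 <= b /\ forall r, a <= r <= b -> f r0 <= f r.
Proof.
  intros Hab Hf.
  (* [continuity_ab_min] needs two-sided continuity, so extend [f] constantly outside [a, b] *)
  set (clamp := fun r => Rmax a (Rmin r b)).
  assert (Hclamp : forall r, a <= clamp r <= b /\ (a <= r <= b -> clamp r = r)).
  { intros r; unfold clamp, Rmin; destruct (Rle_dec r b); unfold Rmax;
      destruct (Rle_dec a _); lra. }
  assert (Hclamp_lip : forall r s, Rabs (clamp r - clamp s) <= Rabs (r - s)).
  { intros r s; unfold clamp, Rmin; destruct (Rle_dec r b), (Rle_dec s b); unfold Rmax;
      repeat match goal with |- context [Rle_dec ?u ?v] => destruct (Rle_dec u v) end;
      split_Rabs; lra. }
  assert (Hcont : forall r, continuity_pt (fun r => f (clamp r)) r).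
  { intros r eps Heps.
    assert (HL : 0 < Rabs L + 1) by (pose proof (Rabs_pos L); lra).
    exists (eps / (Rabs L + 1)); split; [apply Rdiv_lt_0_compat; lra|].
    intros s [_ Hs]; simpl in *; unfold R_dist in *.
    pose proof (Hf (clamp s) (clamp r) (proj1 (Hclamp s)) (proj1 (Hclamp r))).
    pose proof (Hclamp_lip s r); pose proof (Rle_abs L); pose proof (Rabs_pos L);
      pose proof (Rabs_pos (clamp s - clamp r)).
    assert (Hlt : (Rabs L + 1) * Rabs (s - r) < eps).
    { apply (Rmult_lt_compat_l (Rabs L + 1)) in Hs; [|lra].
      replace ((Rabs L + 1) * (eps / (Rabs L + 1))) with eps in Hs by (field; lra). exact Hs. }
    nra. }
  destruct (continuity_ab_min (fun r => f (clamp r)) a b Hab (fun r _ => Hcont r))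
    as [r0 [Hmin Hr0]].
  exists r0; split; [exact Hr0|]; intros r Hr.
  specialize (Hmin r Hr); simpl in Hmin.
  now rewrite (proj2 (Hclamp r) Hr), (proj2 (Hclamp r0) Hr0) in Hmin.
Qed.

Lemma pow_le_pow_le1 y d K : 0 <= y <= 1 -> (d <= K)%nat -> y ^ K <= y ^ d.
Proof.
  intros Hy HdK; replace K with (d + (K - d))%nat by lia; rewrite pow_add.
  pose proof (pow_le y d (proj1 Hy)); pose proof (pow_le y (K - d) (proj1 Hy)).
  assert (y ^ (K - d) <= 1) by (rewrite <- (pow1 (K - d)); apply pow_incr; lra).
  nra.
Qed.

Lemma common_limit_of_uniform_cauchy N (f : nat -> R -> R) :
  (0 < N)%nat ->
  (forall eps, 0 < eps -> exists T, forall i j s t, (i < N)%nat -> (j < N)%nat ->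
     T < s -> T < t -> Rabs (f i s - f j t) < eps) ->
  exists l : R, forall i, (i < N)%nat -> is_lim (f i) p_infty l.
Proof.
  intros HN Hcauchy.
  destruct (proj1 (filterlim_locally_cauchy (F := Rbar_locally p_infty) (f 0%nat)))
    as [l Hl].
  { intros eps; destruct (Hcauchy eps (cond_pos eps)) as [T HT].
    exists (fun t => T < t); split; [now exists T|].
    intros u v Hu Hv; apply (HT 0%nat 0%nat v u); auto. }
  exists l; intros i Hi; apply is_lim_spec; intros eps.
  change (is_lim (f 0%nat) p_infty l) in Hl; apply is_lim_spec in Hl.
  destruct (Hl (pos_div_2 eps)) as [T1 HT1].
  destruct (Hcauchy (eps / 2)) as [T2 HT2]; [apply is_pos_div_2|].
  exists (Rmax T1 T2); intros t Ht.
  pose proof (HT1 t (Rle_lt_trans _ _ _ (Rmax_l T1 T2) Ht)) as H1; simpl in H1.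
  pose proof (HT2 i 0%nat t t Hi HN (Rle_lt_trans _ _ _ (Rmax_r T1 T2) Ht)
                (Rle_lt_trans _ _ _ (Rmax_r T1 T2) Ht)).
  replace (f i t - l) with ((f i t - f 0%nat t) + (f 0%nat t - l)) by ring.
  eapply Rle_lt_trans; [apply Rabs_triang|]. lra.
Qed.

Definition minN (N : nat) (f : nat -> R) : R := fold_right Rmin 1 (map f (seq 0 N)).

Lemma minN_le N f k : (k < N)%nat -> minN N f <= f k.
Proof.
  unfold minN; rewrite <- In_seq0; induction (seq 0 N) as [|k' l IH]; simpl; [easy|].
  intros [<-|Hk]; [apply Rmin_l|].
  eapply Rle_trans; [apply Rmin_r|auto].
Qed.

Lemma minN_pos N f : (forall k, (k < N)%nat -> 0 < f k) -> 0 < minN N f.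
Proof.
  intros Hf; unfold minN.
  assert (H : forall k, In k (seq 0 N) -> 0 < f k) by (intros k; rewrite In_seq0; auto).
  revert H; induction (seq 0 N) as [|k l IH]; intros H; simpl; [lra|].
  apply Rmin_pos; auto with datatypes.
Qed.

Lemma finite_bounded_choice N (P : nat -> nat -> Prop) :
  (forall i, (i < N)%nat -> exists d, P i d) ->
  exists K, forall i, (i < N)%nat -> exists d, (d <= K)%nat /\ P i d.
Proof.
  induction N as [|N IH]; intros HP; [exists 0%nat; lia|].
  destruct IH as [K HK]; [intros i Hi; apply HP; lia|].
  destruct (HP N (Nat.lt_succ_diag_r N)) as [d Hd].
  exists (Nat.max K d); intros i Hi.
  destruct (Nat.eq_dec i N) as [->|Hne].
  - exists d; split; [lia|exact Hd].
  - destruct (HK i ltac:(lia)) as [d' [Hd' HPd']]; exists d'; split; [lia|exact HPd'].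
Qed.

Inductive walk (E : nat -> nat -> Prop) : nat -> nat -> nat -> Prop :=
  | walk_nil i : walk E 0 i i
  | walk_cons d i j k : E i j -> walk E d j k -> walk E (S d) i k.

Lemma walk_of_clos_refl_trans E i j : clos_refl_trans nat E i j -> exists d, walk E d i j.
Proof.
  intros Hij; apply clos_rt_rt1n in Hij.
  induction Hij as [i|i j k Hij _ [d Hd]]; [exists 0%nat; constructor|].
  exists (S d); econstructor; eauto.
Qed.

Lemma walk_lower_bound N (E : nat -> nat -> Prop) (z dz : nat -> R -> R) t0 al :
  0 <= al ->
  (forall i j, E i j -> (i < N)%nat /\ (j < N)%nat) ->
  (forall i s, (i < N)%nat -> t0 <= s -> is_derive (z i) s (dz i s)) ->
  (forall i s, (i < N)%nat -> t0 <= s -> 0 <= z i s) ->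
  (forall i s, (i < N)%nat -> t0 <= s -> 0 <= dz i s) ->
  (forall i j s, E i j -> t0 <= s -> al * z j s <= dz i s) ->
  forall d i q, walk E d i q -> (q < N)%nat ->
  forall t, t0 + INR d <= t -> al ^ d * z q t0 <= z i t.
Proof.
  intros Hal HE Hd Hz Hdz Hedge d i q Hw.
  induction Hw as [i|d i j q Hij Hw IH]; intros Hq t Ht.
  - simpl in Ht |- *; rewrite Rplus_0_r in Ht; rewrite Rmult_1_l.
    assert (0 * (t - t0) <= z i t - z i t0); [|lra].
    apply (increment_ge_of_derive_ge (z i) (dz i) t0).
    + intros s Hs; apply Hd; auto; lra.
    + intros s Hs; apply Hdz; auto; lra.
    + apply (right_continuous_of_derive _ _ (dz i t0)), Hd; auto; lra.
    + lra.
  - destruct (HE i j Hij) as [Hi _].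
    pose proof (pos_INR d) as Hd0; rewrite S_INR in Ht.
    set (b := t0 + INR d) in *.
    assert (Hb : t0 <= b) by (unfold b; lra).
    assert (Hbt : b + 1 <= t) by (unfold b; lra).
    set (c := al ^ S d * z q t0).
    assert (Hc : 0 <= c) by (apply Rmult_le_pos; [apply pow_le|apply Hz]; auto; lra).
    assert (Hinc : c * (t - b) <= z i t - z i b).
    { apply (increment_ge_of_derive_ge (z i) (dz i) b).
      - intros s Hs; apply Hd; auto; lra.
      - intros s Hs; unfold c; simpl; rewrite Rmult_assoc.
        eapply Rle_trans; [|apply Hedge; eauto; lra].
        apply Rmult_le_compat_l; [exact Hal|apply IH; auto; lra].
      - apply (right_continuous_of_derive _ _ (dz i b)), Hd; auto; lra.
      - lra. }
    assert (0 <= z i b) by (apply Hz; auto; lra).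
    nra.
Qed.

Definition consensus_rhs (N : nat) (A : nat -> nat -> R) (X : nat -> R) (i : nat) : R :=
  sumN N (fun k => A i k * (X k - X i)).

Lemma consensus_rhs_opp N A X i :
  consensus_rhs N A (fun k => - X k) i = - consensus_rhs N A X i.
Proof.
  unfold consensus_rhs.
  replace (- sumN N _) with (-1 * sumN N (fun k => A i k * (X k - X i))) by ring.
  rewrite <- sumN_scal; apply sumN_ext; intros; ring.
Qed.

Section RowSubstochastic.

Variables (N : nat) (A : nat -> nat -> R) (X : nat -> R) (i : nat).
Hypothesis i_lt_N : (i < N)%nat.
Hypothesis A_nonneg : forall k, (k < N)%nat -> 0 <= A i k.
Hypothesis A_row_sum : sumN N (A i) <= 1.

Lemma excess_mul_consensus_rhs_le M :
  Rmax (X i - M) 0 * consensus_rhs N A X i <= sumN N (fun k => pos_part_sq (X k - M)).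
Proof.
  set (p := fun k => Rmax (X k - M) 0).
  set (P := sumN N (fun k => pos_part_sq (X k - M))).
  assert (Hp : forall k, 0 <= p k) by (intros; apply Rmax_r).
  assert (HpP : forall k, (k < N)%nat -> p k * p k <= P).
  { intros k Hk; apply (sumN_term_le N (fun k => pos_part_sq (X k - M))); auto.
    intros; apply pos_part_sq_nonneg. }
  destruct (Rle_dec (X i - M) 0) as [Hle|Hgt].
  - unfold p; rewrite Rmax_right, Rmult_0_l by exact Hle.
    apply sumN_nonneg; intros; apply pos_part_sq_nonneg.
  - assert (Hpi : p i = X i - M) by (apply Rmax_left; lra).
    fold (p i).
    assert (Hrhs : consensus_rhs N A X i <= sumN N (fun k => A i k * p k)).
    { apply sumN_le; intros k Hk; apply Rmult_le_compat_l; [auto|].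
      pose proof (Rmax_l (X k - M) 0); fold (p k) in *; lra. }
    apply Rle_trans with (p i * sumN N (fun k => A i k * p k));
      [apply Rmult_le_compat_l; auto|].
    rewrite <- sumN_scal.
    apply Rle_trans with (sumN N (fun k => A i k * P)).
    + apply sumN_le; intros k Hk.
      pose proof (HpP i i_lt_N); pose proof (HpP k Hk); pose proof (Hp i); pose proof (Hp k).
      assert (p i * p k <= P) by nra.
      pose proof (A_nonneg k Hk); nra.
    + replace (sumN N (fun k => A i k * P)) with (P * sumN N (A i))
        by (rewrite <- sumN_scal; apply sumN_ext; intros; ring).
      assert (0 <= P) by (apply sumN_nonneg; intros; apply pos_part_sq_nonneg).
      nra.
Qed.

Lemma gap_term_le_deficit M j :
  (j < N)%nat -> (forall k, (k < N)%nat -> X k <= M) ->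
  A i j * (M - X j) <= M - X i - consensus_rhs N A X i.
Proof.
  intros Hj HM.
  assert (Hsplit : M - X i - consensus_rhs N A X i =
    (M - X i) * (1 - sumN N (A i)) + sumN N (fun k => A i k * (M - X k))).
  { unfold consensus_rhs.
    rewrite Rmult_minus_distr_l, Rmult_1_r, <- sumN_scal.
    assert (sumN N (fun k => A i k * (X k - X i)) =
            sumN N (fun k => (M - X i) * A i k) + -1 * sumN N (fun k => A i k * (M - X k)))
      as -> ; [|ring].
    rewrite <- sumN_scal, <- sumN_plus; apply sumN_ext; intros; ring. }
  assert (Hterm : A i j * (M - X j) <= sumN N (fun k => A i k * (M - X k))).
  { apply (sumN_term_le N (fun k => A i k * (M - X k))); auto.
    intros k Hk; apply Rmult_le_pos; [auto|pose proof (HM k Hk); lra]. }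
  pose proof (HM i i_lt_N).
  assert (0 <= (M - X i) * (1 - sumN N (A i))) by (apply Rmult_le_pos; lra).
  lra.
Qed.

End RowSubstochastic.

Section ForwardBounds.

Variables (N : nat) (x : R -> nat -> R) (a : R -> nat -> nat -> R).
Hypothesis x_ode : forall t i, 0 < t -> (i < N)%nat ->
  is_derive (fun s => x s i) t (consensus_rhs N (a t) (x t) i).
Hypothesis a_nonneg : forall t i k, 0 < t -> (i < N)%nat -> (k < N)%nat -> 0 <= a t i k.
Hypothesis a_row_sum : forall t i, 0 < t -> (i < N)%nat -> sumN N (a t i) <= 1.

(* Gronwall for [F = sum_k (x_k - M)_+^2], which vanishes at [t0] and has [F' <= 2 N F]. *)
Lemma upper_bound_forward t0 M :
  0 < t0 -> (forall k, (k < N)%nat -> x t0 k <= M) ->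
  forall t k, t0 <= t -> (k < N)%nat -> x t k <= M.
Proof.
  intros Ht0 HM.
  set (F := fun t => sumN N (fun k => pos_part_sq (x t k - M))).
  set (dF := fun t =>
    sumN N (fun k => consensus_rhs N (a t) (x t) k * (2 * Rmax (x t k - M) 0))).
  assert (HdF : forall t, 0 < t -> is_derive F t (dF t)).
  { intros t Ht; apply (is_derive_sumN N (fun s k => pos_part_sq (x s k - M))).
    intros k Hk.
    assert (Hxk : is_derive (fun s => x s k - M) t (consensus_rhs N (a t) (x t) k)).
    { rewrite <- (Rminus_0_r (consensus_rhs _ _ _ _)).
      exact (is_derive_minus _ _ t _ _ (x_ode t k Ht Hk) (is_derive_const M t)). }
    exact (is_derive_comp pos_part_sq _ t _ _ (is_derive_pos_part_sq _) Hxk). }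
  assert (Hgrowth : forall t, 0 < t -> dF t <= 2 * INR N * F t).
  { intros t Ht; apply Rle_trans with (sumN N (fun _ => 2 * F t)).
    - apply sumN_le; intros k Hk.
      pose proof (excess_mul_consensus_rhs_le N (a t) (x t) k Hk
                    (fun j Hj => a_nonneg t k j Ht Hk Hj) (a_row_sum t k Ht Hk) M).
      unfold F; nra.
    - rewrite sumN_const; lra. }
  assert (HF0 : F t0 = 0).
  { unfold F; rewrite <- (Rmult_0_r (INR N)), <- sumN_const.
    apply sumN_ext; intros k Hk; specialize (HM k Hk).
    unfold pos_part_sq; rewrite Rmax_right by lra; ring. }
  intros t k Ht Hk.
  pose proof (gronwall F dF t0 (2 * INR N) (fun s Hs => HdF s ltac:(lra))
    (fun s Hs => Hgrowth s ltac:(lra)) (right_continuous_of_derive _ _ _ (HdF t0 Ht0)) t Ht)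
    as HFt.
  rewrite HF0, Rmult_0_l in HFt.
  assert (Hk_le : pos_part_sq (x t k - M) <= F t).
  { apply (sumN_term_le N (fun k => pos_part_sq (x t k - M))); auto.
    intros; apply pos_part_sq_nonneg. }
  unfold pos_part_sq in Hk_le; destruct (Rle_dec (x t k - M) 0); [lra|].
  rewrite Rmax_left in Hk_le by lra; nra.
Qed.

Lemma gap_along_walk (E : nat -> nat -> Prop) al t0 M :
  (forall i j, E i j -> (i < N)%nat /\ (j < N)%nat) ->
  (forall t i j, 0 < t -> E i j -> al <= a t i j) -> 0 <= al ->
  0 < t0 -> (forall k, (k < N)%nat -> x t0 k <= M) ->
  forall d i q, walk E d i q -> (q < N)%nat ->
  forall t, t0 + INR d <= t -> al ^ d * (M - x t0 q) <= (M - x t i) * exp (t - t0).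
Proof.
  intros HE Hal Hal0 Ht0 HM d i q Hw Hq t Ht.
  pose proof (upper_bound_forward t0 M Ht0 HM) as Hinv.
  set (z := fun k s => (M - x s k) * exp (1 * (s - t0))).
  set (dz := fun k s =>
    (- consensus_rhs N (a s) (x s) k + 1 * (M - x s k)) * exp (1 * (s - t0))).
  assert (Hdeficit : forall k j s, (k < N)%nat -> (j < N)%nat -> t0 <= s ->
            a s k j * (M - x s j) * exp (1 * (s - t0)) <= dz k s).
  { intros k j s Hk Hj Hs; apply Rmult_le_compat_r; [left; apply exp_pos|].
    pose proof (gap_term_le_deficit N (a s) (x s) k Hk
                  (fun l Hl => a_nonneg s k l ltac:(lra) Hk Hl)
                  (a_row_sum s k ltac:(lra) Hk) M j Hj (fun l Hl => Hinv s l Hs Hl)).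
    lra. }
  replace (M - x t0 q) with (z q t0) by (unfold z; rewrite Rminus_diag, Rmult_0_r, exp_0; ring).
  replace (exp (t - t0)) with (exp (1 * (t - t0))) by (f_equal; ring).
  apply (walk_lower_bound N E z dz t0 al Hal0 HE); auto.
  - intros k s Hk Hs; apply (is_derive_mult_exp (fun s => M - x s k)).
    rewrite <- (Rminus_0_l (consensus_rhs _ _ _ _)).
    exact (is_derive_minus _ _ s _ _ (is_derive_const M s) (x_ode s k ltac:(lra) Hk)).
  - intros k s Hk Hs; apply Rmult_le_pos; [pose proof (Hinv s k Hs Hk); lra|].
    left; apply exp_pos.
  - intros k s Hk Hs; eapply Rle_trans; [|apply (Hdeficit k k s Hk Hk Hs)].
    apply Rmult_le_pos; [|left; apply exp_pos].
    apply Rmult_le_pos; [apply a_nonneg; auto; lra|pose proof (Hinv s k Hs Hk); lra].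
  - intros k j s Hkj Hs; destruct (HE k j Hkj) as [Hk Hj].
    eapply Rle_trans; [|apply (Hdeficit k j s Hk Hj Hs)]; unfold z.
    rewrite <- Rmult_assoc; apply Rmult_le_compat_r; [left; apply exp_pos|].
    apply Rmult_le_compat_r; [pose proof (Hinv s j Hs Hj); lra|apply Hal; auto; lra].
Qed.

Lemma upper_contraction (E : nat -> nat -> Prop) al K t0 M q :
  (forall i j, E i j -> (i < N)%nat /\ (j < N)%nat) ->
  (forall t i j, 0 < t -> E i j -> al <= a t i j) ->
  0 <= al <= 1 ->
  (forall i, (i < N)%nat -> exists d, (d <= K)%nat /\ walk E d i q) ->
  (q < N)%nat -> 0 < t0 -> (forall k, (k < N)%nat -> x t0 k <= M) ->
  forall i, (i < N)%nat ->
  x (t0 + INR K) i <= M - al ^ K * exp (- INR K) * (M - x t0 q).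
Proof.
  intros HE Hal Hal01 Hwalks Hq Ht0 HM i Hi.
  destruct (Hwalks i Hi) as [d [HdK Hw]].
  pose proof (gap_along_walk E al t0 M HE Hal (proj1 Hal01) Ht0 HM d i q Hw Hq (t0 + INR K)
                ltac:(apply Rplus_le_compat_l, le_INR, HdK)) as Hgap.
  replace (t0 + INR K - t0) with (INR K) in Hgap by ring.
  assert (Hpow : al ^ K <= al ^ d) by (apply pow_le_pow_le1; auto).
  assert (0 <= M - x t0 q) by (pose proof (HM q Hq); lra).
  assert (Hexp : exp (INR K) * exp (- INR K) = 1)
    by (rewrite <- exp_plus, <- exp_0; f_equal; ring).
  assert (Hlow : al ^ K * (M - x t0 q) <= (M - x (t0 + INR K) i) * exp (INR K))
    by (eapply Rle_trans; [apply Rmult_le_compat_r|]; eauto).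
  assert (al ^ K * exp (- INR K) * (M - x t0 q) <= M - x (t0 + INR K) i); [|lra].
  replace (M - x (t0 + INR K) i)
    with ((M - x (t0 + INR K) i) * exp (INR K) * exp (- INR K))
    by (rewrite Rmult_assoc, Hexp; ring).
  rewrite Rmult_assoc, (Rmult_comm (exp _)), <- Rmult_assoc.
  apply Rmult_le_compat_r; [left; apply exp_pos|exact Hlow].
Qed.

End ForwardBounds.

Section Consensus.

Variables (N : nat) (x : R -> nat -> R) (a : R -> nat -> nat -> R).
Hypothesis x_ode : forall t i, 0 < t -> (i < N)%nat ->
  is_derive (fun s => x s i) t (consensus_rhs N (a t) (x t) i).
Hypothesis a_nonneg : forall t i k, 0 < t -> (i < N)%nat -> (k < N)%nat -> 0 <= a t i k.
Hypothesis a_row_sum : forall t i, 0 < t -> (i < N)%nat -> sumN N (a t i) <= 1.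
Variables (E : nat -> nat -> Prop) (al : R) (K : nat).
Hypothesis E_in_range : forall i j, E i j -> (i < N)%nat /\ (j < N)%nat.
Hypothesis a_ge_on_E : forall t i j, 0 < t -> E i j -> al <= a t i j.
Hypothesis al_range : 0 < al <= 1.
Hypothesis walks_to_0 : forall i, (i < N)%nat -> exists d, (d <= K)%nat /\ walk E d i 0.
Hypothesis N_pos : (0 < N)%nat.
Hypothesis x_bounded : forall t k, 0 <= t -> (k < N)%nat -> -1 <= x t k <= 1.

Let opp_x_ode t i : 0 < t -> (i < N)%nat ->
  is_derive (fun s => - x s i) t (consensus_rhs N (a t) (fun k => - x t k) i).
Proof. intros Ht Hi; rewrite consensus_rhs_opp; apply (is_derive_opp (fun s => x s i)); auto. Qed.

Let beta := al ^ K * exp (- INR K).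

Let beta_range : 0 < beta <= 1.
Proof.
  pose proof (pow_lt al K (proj1 al_range)); pose proof (exp_pos (- INR K)).
  assert (al ^ K <= 1) by (rewrite <- (pow1 K); apply pow_incr; lra).
  assert (exp (- INR K) <= 1).
  { rewrite <- exp_0; destruct (Rle_lt_or_eq_dec 0 (INR K) (pos_INR K)) as [HK|<-].
    - left; apply exp_increasing; lra.
    - rewrite Ropp_0; lra. }
  unfold beta; split; [apply Rmult_lt_0_compat|]; nra.
Qed.

Lemma interval_forward t0 m M :
  0 < t0 -> (forall k, (k < N)%nat -> m <= x t0 k <= M) ->
  forall t k, t0 <= t -> (k < N)%nat -> m <= x t k <= M.
Proof.
  intros Ht0 HmM t k Ht Hk; split.
  - assert (- x t k <= - m); [|lra].
    apply (upper_bound_forward N (fun t k => - x t k) a opp_x_ode a_nonneg a_row_sum t0);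
      auto; intros j Hj; specialize (HmM j Hj); lra.
  - apply (upper_bound_forward N x a x_ode a_nonneg a_row_sum t0); auto.
    intros j Hj; apply HmM, Hj.
Qed.

Lemma interval_contraction t0 m M :
  0 < t0 -> (forall k, (k < N)%nat -> m <= x t0 k <= M) ->
  forall i, (i < N)%nat ->
  m + beta * (x t0 0%nat - m) <= x (t0 + INR K) i <= M - beta * (M - x t0 0%nat).
Proof.
  intros Ht0 HmM i Hi; split.
  - assert (- x (t0 + INR K) i <= - m - beta * (- m - - x t0 0%nat)); [|lra].
    apply (upper_contraction N (fun t k => - x t k) a opp_x_ode a_nonneg a_row_sum E);
      auto; [lra|intros j Hj; specialize (HmM j Hj); lra].
  - apply (upper_contraction N x a x_ode a_nonneg a_row_sum E); auto; [lra|].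
    intros j Hj; apply HmM, Hj.
Qed.

Lemma nested_intervals n : exists m M, M - m = 2 * (1 - beta) ^ n /\
  forall t k, 1 + INR n * INR K <= t -> (k < N)%nat -> m <= x t k <= M.
Proof.
  induction n as [|n [m [M [Hwidth HmM]]]].
  - exists (-1), 1; split; [simpl; ring|].
    intros t k Ht Hk; apply x_bounded; auto; simpl in Ht; lra.
  - set (t0 := 1 + INR n * INR K).
    assert (Ht0 : 0 < t0) by (unfold t0; pose proof (pos_INR n); pose proof (pos_INR K); nra).
    assert (Hx0 : forall k, (k < N)%nat -> m <= x t0 k <= M)
      by (intros; apply HmM; [unfold t0; lra|auto]).
    exists (m + beta * (x t0 0%nat - m)), (M - beta * (M - x t0 0%nat)); split.
    + replace (2 * (1 - beta) ^ S n) with ((1 - beta) * (2 * (1 - beta) ^ n))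
        by (rewrite <- tech_pow_Rmult; ring).
      rewrite <- Hwidth; ring.
    + intros t k Ht Hk.
      pose proof (pos_INR K).
      apply (interval_forward (t0 + INR K)); auto; [lra| |].
      * intros j Hj; apply interval_contraction; auto.
      * unfold t0; rewrite S_INR in Ht; lra.
Qed.

Theorem linear_consensus :
  exists xs : R, forall i, (i < N)%nat -> is_lim (fun t => x t i) p_infty xs.
Proof.
  pose proof beta_range as Hbeta.
  apply (common_limit_of_uniform_cauchy N (fun i t => x t i) N_pos).
  intros eps Heps.
  destruct (pow_lt_1_zero (1 - beta)) with (y := eps / 2) as [n Hn];
    [rewrite Rabs_right; lra|lra|].
  specialize (Hn n (le_n n)); rewrite Rabs_right in Hn by (apply Rle_ge, pow_le; lra).
  destruct (nested_intervals n) as [m [M [Hwidth HmM]]].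
  exists (1 + INR n * INR K); intros i j s t Hi Hj Hs Ht.
  pose proof (HmM s i ltac:(lra) Hi); pose proof (HmM t j ltac:(lra) Hj).
  apply Rabs_def1; lra.
Qed.

End Consensus.

Section OpinionNetwork.

Variables (N : nat) (phi : R -> R) (x : R -> nat -> R) (w : R -> nat -> nat -> R).
Variable mp : R.
Hypothesis phi_range : forall r, -2 <= r <= 2 -> 0 <= phi r <= 1.
Hypothesis mp_pos : 0 < mp.
Hypothesis phi_margin : forall r, -2 <= r <= 2 -> mp <= 2 * phi r - 1.
Hypothesis x_range : forall t i, 0 <= t -> (i < N)%nat -> -1 <= x t i <= 1.
Hypothesis w_range : forall t i j, 0 <= t -> (i < N)%nat -> (j < N)%nat -> 0 <= w t i j <= 1.
Hypothesis w_diag : forall t i, 0 <= t -> (i < N)%nat -> w t i i = 1.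
Hypothesis w_cont0 : forall i j, (i < N)%nat -> (j < N)%nat ->
  filterlim (fun s => w s i j) (at_right 0) (locally (w 0 i j)).
Hypothesis x_ode : forall t i, 0 < t -> (i < N)%nat ->
  is_derive (fun s => x s i) t (opinion_rhs N phi (x t) (w t) i).
Hypothesis w_ode : forall t i j, 0 < t -> (i < N)%nat -> (j < N)%nat -> i <> j ->
  is_derive (fun s => w s i j) t (weight_rhs phi (x t) (w t) i j).
Hypothesis w0_connected : strongly_connected N (w 0).

Let phi_at_gap t i j : 0 <= t -> (i < N)%nat -> (j < N)%nat ->
  0 <= phi (x t j - x t i) <= 1 /\ mp <= 2 * phi (x t j - x t i) - 1.
Proof.
  intros Ht Hi Hj; pose proof (x_range t i Ht Hi); pose proof (x_range t j Ht Hj).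
  split; [apply phi_range|apply phi_margin]; lra.
Qed.

Lemma weight_nondecreasing i j s t :
  (i < N)%nat -> (j < N)%nat -> 0 <= s <= t -> w s i j <= w t i j.
Proof.
  intros Hi Hj Hst; destruct (Nat.eq_dec i j) as [<-|Hij].
  - rewrite !w_diag by (auto; lra); lra.
  - assert (0 * (t - s) <= w t i j - w s i j); [|lra].
    apply (increment_ge_of_derive_ge (fun u => w u i j)
             (fun u => weight_rhs phi (x u) (w u) i j) 0); auto.
    intros u Hu; unfold weight_rhs.
    pose proof (w_range u i j ltac:(lra) Hi Hj); pose proof (phi_at_gap u i j ltac:(lra) Hi Hj).
    apply Rmult_le_pos; [apply Rmult_le_pos|]; lra.
Qed.

Lemma weight_limit_of_pos i j : (i < N)%nat -> (j < N)%nat -> 0 < w 0 i j ->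
  is_lim (fun t => w t i j) p_infty 1.
Proof.
  intros Hi Hj Hw0; destruct (Nat.eq_dec i j) as [<-|Hij].
  { apply (is_lim_ext_loc (fun _ => 1)); [|apply is_lim_const].
    exists 0; intros t Ht; symmetry; apply w_diag; auto; lra. }
  set (k := w 0 i j * mp).
  assert (Hk : 0 < k) by (apply Rmult_lt_0_compat; auto).
  (* [w_ij >= w_ij(0)] and [2 phi - 1 >= mp] make [1 - w_ij] decay at rate [k] *)
  assert (Hdecay : forall t, 0 <= t -> 1 - w t i j <= (1 - w 0 i j) * exp (- k * (t - 0))).
  { apply (gronwall (fun t => 1 - w t i j) (fun t => - weight_rhs phi (x t) (w t) i j)).
    - intros t Ht; rewrite <- (Rminus_0_l (weight_rhs _ _ _ _ _)).
      exact (is_derive_minus _ _ t _ _ (is_derive_const 1 t) (w_ode t i j Ht Hi Hj Hij)).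
    - intros t Ht; unfold weight_rhs.
      pose proof (w_range t i j ltac:(lra) Hi Hj); pose proof (phi_at_gap t i j ltac:(lra) Hi Hj).
      pose proof (weight_nondecreasing i j 0 t Hi Hj ltac:(lra)).
      assert (k <= w t i j * (2 * phi (x t j - x t i) - 1))
        by (apply Rmult_le_compat; lra).
      nra.
    - eapply filterlim_comp; [exact (w_cont0 i j Hi Hj)|].
      apply (ex_derive_continuous (K := R_AbsRing) (V := R_NormedModule) (fun y => 1 - y)).
      auto_derive; easy. }
  apply is_lim_spec; intros eps.
  exists (Rmax 0 (- ln eps / k)); intros t Ht.
  assert (Ht0 : 0 < t) by (eapply Rle_lt_trans; [apply Rmax_l|exact Ht]).
  assert (Hexp : exp (- k * (t - 0)) < eps).
  { rewrite Rminus_0_r; apply exp_decay_lt; [exact Hk|apply cond_pos|].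
    eapply Rle_lt_trans; [apply Rmax_r|exact Ht]. }
  pose proof (Hdecay t ltac:(lra)); pose proof (w_range 0 i j ltac:(lra) Hi Hj).
  pose proof (w_range t i j ltac:(lra) Hi Hj); pose proof (exp_pos (- k * (t - 0))).
  rewrite Rabs_left1 by lra; nra.
Qed.

Lemma weight_stays_zero i j : (i < N)%nat -> (j < N)%nat -> w 0 i j = 0 ->
  forall t, 0 <= t -> w t i j = 0.
Proof.
  intros Hi Hj Hw0 t Ht; destruct (Nat.eq_dec i j) as [<-|Hij].
  { rewrite w_diag in Hw0 by (auto; lra); lra. }
  assert (w t i j <= w 0 i j * exp (1 * (t - 0))); [|pose proof (w_range t i j Ht Hi Hj); nra].
  apply (gronwall (fun t => w t i j) (fun t => weight_rhs phi (x t) (w t) i j)); auto.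
  intros u Hu; unfold weight_rhs.
  pose proof (w_range u i j ltac:(lra) Hi Hj); pose proof (phi_at_gap u i j ltac:(lra) Hi Hj).
  assert ((1 - w u i j) * (2 * phi (x u j - x u i) - 1) <= 1) by nra.
  nra.
Qed.

Lemma weight_limit i j : (i < N)%nat -> (j < N)%nat ->
  is_lim (fun t => w t i j) p_infty (ind_pos (w 0 i j)).
Proof.
  intros Hi Hj; unfold ind_pos; destruct (Rlt_dec 0 (w 0 i j)) as [Hpos|Hnpos].
  - now apply weight_limit_of_pos.
  - assert (Hw0 : w 0 i j = 0) by (pose proof (w_range 0 i j ltac:(lra) Hi Hj); lra).
    apply (is_lim_ext_loc (fun _ => 0)); [|apply is_lim_const].
    exists 0; intros t Ht; symmetry; apply weight_stays_zero; auto; lra.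
Qed.

Definition influence t i k := w t i k * phi (x t k - x t i) / degree N (w t) i.

Lemma degree_range t i : 0 <= t -> (i < N)%nat -> 1 <= degree N (w t) i <= INR N.
Proof.
  intros Ht Hi; unfold degree; split.
  - rewrite <- (w_diag t i Ht Hi) at 1.
    apply (sumN_term_le N (w t i)); auto; intros k Hk; apply w_range; auto.
  - rewrite <- (Rmult_1_r (INR N)), <- sumN_const.
    apply sumN_le; intros k Hk; apply w_range; auto.
Qed.

Lemma opinion_rhs_eq_consensus_rhs t i :
  opinion_rhs N phi (x t) (w t) i = consensus_rhs N (influence t) (x t) i.
Proof.
  unfold opinion_rhs, consensus_rhs, influence; rewrite <- sumN_scal.
  apply sumN_ext; intros k _; destruct (Nat.eqb_spec k i) as [->|]; unfold Rdiv; ring.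
Qed.

Lemma influence_nonneg t i k : 0 < t -> (i < N)%nat -> (k < N)%nat -> 0 <= influence t i k.
Proof.
  intros Ht Hi Hk; unfold influence.
  pose proof (degree_range t i ltac:(lra) Hi); pose proof (w_range t i k ltac:(lra) Hi Hk).
  pose proof (phi_at_gap t i k ltac:(lra) Hi Hk).
  apply Rdiv_le_0_compat; [apply Rmult_le_pos|]; lra.
Qed.

Lemma influence_row_sum t i : 0 < t -> (i < N)%nat -> sumN N (influence t i) <= 1.
Proof.
  intros Ht Hi; pose proof (degree_range t i ltac:(lra) Hi) as Hdeg.
  replace (sumN N (influence t i))
    with (/ degree N (w t) i * sumN N (fun k => w t i k * phi (x t k - x t i)))
    by (rewrite <- sumN_scal; apply sumN_ext; intros; unfold influence, Rdiv; ring).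
  rewrite <- (Rinv_l (degree N (w t) i)) by lra.
  apply Rmult_le_compat_l; [left; apply Rinv_0_lt_compat; lra|].
  apply sumN_le; intros k Hk.
  pose proof (w_range t i k ltac:(lra) Hi Hk); pose proof (phi_at_gap t i k ltac:(lra) Hi Hk).
  nra.
Qed.

Lemma influence_ge_initial_weight t i j : 0 < t -> (i < N)%nat -> (j < N)%nat ->
  w 0 i j / (2 * INR N) <= influence t i j.
Proof.
  intros Ht Hi Hj; unfold influence.
  pose proof (degree_range t i ltac:(lra) Hi); pose proof (phi_at_gap t i j ltac:(lra) Hi Hj).
  pose proof (w_range 0 i j ltac:(lra) Hi Hj).
  pose proof (weight_nondecreasing i j 0 t Hi Hj ltac:(lra)).
  unfold Rdiv; rewrite Rinv_mult, <- Rmult_assoc.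
  apply Rmult_le_compat.
  - lra.
  - left; apply Rinv_0_lt_compat; lra.
  - nra.
  - apply Rinv_le_contravar; lra.
Qed.

Theorem opinions_reach_consensus :
  exists xs : R, forall i, (i < N)%nat -> is_lim (fun t => x t i) p_infty xs.
Proof.
  destruct (Nat.eq_dec N 0) as [HN|HN]; [exists 0; intros i Hi; lia|].
  set (floor := fun i j => if Rlt_dec 0 (w 0 i j) then w 0 i j else 1).
  set (al := minN N (fun i => minN N (floor i)) / (2 * INR N)).
  assert (HN' : 0 < INR N) by (apply lt_0_INR; lia).
  assert (Hal_edge : forall t i j, 0 < t -> pos_edge N (w 0) i j -> al <= influence t i j).
  { intros t i j Ht [Hi [Hj Hw]]; eapply Rle_trans; [|apply influence_ge_initial_weight; auto].
    apply Rmult_le_compat_r; [left; apply Rinv_0_lt_compat; lra|].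
    eapply Rle_trans; [apply minN_le, Hi|].
    eapply Rle_trans; [apply minN_le, Hj|].
    unfold floor; destruct (Rlt_dec 0 (w 0 i j)); lra. }
  assert (Hal_pos : 0 < al).
  { apply Rdiv_lt_0_compat; [|lra].
    apply minN_pos; intros i Hi; apply minN_pos; intros j Hj.
    unfold floor; destruct (Rlt_dec 0 (w 0 i j)); lra. }
  assert (Hself : pos_edge N (w 0) 0%nat 0%nat).
  { split; [lia|split; [lia|]]; rewrite w_diag by (lra || lia); lra. }
  assert (Hal_le1 : al <= 1).
  { apply Rle_trans with (influence 1 0%nat 0%nat); [apply Hal_edge; auto; lra|].
    eapply Rle_trans; [apply (sumN_term_le N (influence 1 0%nat))|apply influence_row_sum];
      try lia; try lra; intros; apply influence_nonneg; auto; lra || lia. }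
  destruct (finite_bounded_choice N (fun i d => walk (pos_edge N (w 0)) d i 0))
    as [K HK].
  { intros i Hi; apply walk_of_clos_refl_trans, w0_connected; auto; lia. }
  apply (linear_consensus N x influence) with (E := pos_edge N (w 0)) (al := al) (K := K);
    auto; try lia.
  - intros t i Ht Hi; rewrite <- opinion_rhs_eq_consensus_rhs; auto.
  - apply influence_nonneg.
  - apply influence_row_sum.
  - intros i j [Hi [Hj _]]; auto.
Qed.

End OpinionNetwork.

Lemma phi_margin_of_lipschitz (phi : R -> R) c :
  lipschitz_on_22 phi -> c >= 1/2 -> (forall r, -2 <= r <= 2 -> phi r > c) ->
  exists mp, 0 < mp /\ forall r, -2 <= r <= 2 -> mp <= 2 * phi r - 1.
Proof.
  intros [L HL] Hc Hphi.
  destruct (lipschitz_attains_min phi (-2) 2 L ltac:(lra) HL) as [r0 [Hr0 Hmin]].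
  exists (2 * phi r0 - 1); split; [specialize (Hphi r0 Hr0); lra|].
  intros r Hr; specialize (Hmin r Hr); lra.
Qed.

Theorem corollary2
  (N : nat) (phi : R -> R) (c : R)
  (x : R -> nat -> R) (w : R -> nat -> nat -> R)
  (* standing assumptions on the interaction function phi : [-2,2] -> [0,1] *)
  (Hphi_range : forall r, -2 <= r <= 2 -> 0 <= phi r <= 1)
  (Hphi_lip : lipschitz_on_22 phi)
  (Hphi_even : forall r, -2 <= r <= 2 -> phi (- r) = phi r)
  (Hphi0 : phi 0 > 0)
  (* extra hypothesis of the corollary *)
  (Hc : c >= 1/2)
  (Hphi_c : forall r, -2 <= r <= 2 -> phi r > c)
  (* state space: x_i(t) in [-1,1], w_ij(t) in [0,1], w_ii = 1 *)
  (Hx_range : forall t i, 0 <= t -> (i < N)%nat -> -1 <= x t i <= 1)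
  (Hw_range : forall t i j, 0 <= t -> (i < N)%nat -> (j < N)%nat ->
      0 <= w t i j <= 1)
  (Hw_diag : forall t i, 0 <= t -> (i < N)%nat -> w t i i = 1)
  (* initial conditions *)
  (Hx_sorted : forall i j, (i <= j)%nat -> (j < N)%nat -> x 0 i <= x 0 j)
  (Hconn : strongly_connected N (w 0))
  (* continuity at t = 0 (from the right) *)
  (Hx_cont0 : forall i, (i < N)%nat ->
      filterlim (fun s => x s i) (at_right 0) (locally (x 0 i)))
  (Hw_cont0 : forall i j, (i < N)%nat -> (j < N)%nat ->
      filterlim (fun s => w s i j) (at_right 0) (locally (w 0 i j)))
  (* the ODE system for t > 0 *)
  (Hx_ode : forall t i, 0 < t -> (i < N)%nat ->
      is_derive (fun s => x s i) t (opinion_rhs N phi (x t) (w t) i))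
  (Hw_ode : forall t i j, 0 < t -> (i < N)%nat -> (j < N)%nat -> i <> j ->
      is_derive (fun s => w s i j) t (weight_rhs phi (x t) (w t) i j)) :
  (exists xstar : R, forall i, (i < N)%nat ->
      is_lim (fun t => x t i) p_infty xstar)
  /\ (forall i j, (i < N)%nat -> (j < N)%nat ->
      is_lim (fun t => w t i j) p_infty (ind_pos (w 0 i j))).
Proof.
  destruct (phi_margin_of_lipschitz phi c Hphi_lip Hc Hphi_c) as [mp [Hmp Hmargin]].
  split.
  - eapply opinions_reach_consensus; eassumption.
  - intros i j Hi Hj; eapply weight_limit; eassumption.
Qed.
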